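(* Let $d\ge2$ and $\mathbf{x}_i=(x_{1,i},\ldots,x_{n_i,i})^\top\in\mathbb{R}^{n_i}$, $i\in[d]$, with $\mathbf{1}_{n_i}^\top\mathbf{x}_i=\mathbf{1}_{n_{i+1}}^\top\mathbf{x}_{i+1}$ for $i\in[d-1]$. Then $$\frac{n_1\cdots n_d}{\max_in_i}\sum_{i=1}^d\|\mathbf{x}_i\|^2\le\sum_{j_1=1}^{n_1}\cdots\sum_{j_d=1}^{n_d}(x_{j_1,1}+\cdots+x_{j_d,d})^2\le\sum_{i=1}^d\frac{dn_1\cdots n_d}{n_i}\|\mathbf{x}_i\|^2\le\frac{dn_1\cdots n_d}{\min_in_i}\sum_{i=1}^d\|\mathbf{x}_i\|^2.$$
   Context: $\|\cdot\|$ is the Euclidean norm and $\mathbf{1}_n$ the all-ones vector. *)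

From HB Require Import structures.
From mathcomp Require Import all_boot all_order all_algebra.
Set Implicit Arguments. Unset Strict Implicit. Unset Printing Implicit Defensive.
Import Order.TTheory GRing.Theory Num.Theory.
Local Open Scope ring_scope.

Definition sqnorm (R : ringType) (m : nat) (v : 'cV[R]_m) : R :=
  \sum_(k < m) v k 0 ^+ 2.

Definition onesum (R : ringType) (m : nat) (v : 'cV[R]_m) : R :=
  \sum_(k < m) v k 0.

(* max_i n_i and min_i n_i over i in [d] (min taken with the max as neutral
   element, which is correct whenever d >= 1). *)
Definition nmax (d : nat) (n : 'I_d -> nat) : nat := (\max_(i < d) n i)%N.
Definition nmin (d : nat) (n : 'I_d -> nat) : nat :=
  \big[minn/nmax n]_(i < d) n i.

From HB Require Import structures.
From mathcomp Require Import all_boot all_order all_algebra.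
From mathcomp Require Import ring.
Set Implicit Arguments. Unset Strict Implicit. Unset Printing Implicit Defensive.
Import Order.TTheory GRing.Theory Num.Theory.
Local Open Scope ring_scope.

(* Expanding the square, the tuple sum is
   sum_(i,k) sum_j x_(j_i,i) x_(j_k,k).  Summing out the free coordinates, the
   term (i, i) is (N / n_i) ||x_i||^2 and the term (i, k), i != k, is
   (N / (n_i n_k)) s_i s_k with s_i = 1^T x_i; all s_i are equal, so these cross
   terms are squares, which gives the lower bound.  The upper bound is
   (sum_i a_i)^2 <= d sum_i a_i^2 applied to every tuple, and the outer bounds
   compare n_i with max_i n_i and min_i n_i. *)

Section DependentProductSums.
Variables (R : comPzSemiRingType) (I : finType) (T_ : I -> finType).
Notation J := {dffun forall i, T_ i}.

Lemma sum_dffun_prod (F : forall i, T_ i -> R) :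
  \sum_(f : J) \prod_i F i (f i) = \prod_i \sum_(y : T_ i) F i y.
Proof.
(* Distributivity is available for the isomorphic type [fprod T_]. *)
pose P i : {ffun T_ i -> R} := [ffun y => F i y].
transitivity (\sum_(t : fprod T_) \prod_i P i (t i)).
  rewrite (reindex (@dffun_of_fprod I T_)); last exact/onW_bij/dffun_of_fprod_bij.
  by apply: eq_bigr => t _; apply: eq_bigr => i _; rewrite !ffunE.
transitivity (\prod_i \sum_(y : T_ i) P i y); last first.
  by apply: eq_bigr => i _; apply: eq_bigr => y _; rewrite ffunE.
rewrite big_fprod.
transitivity (\prod_i \sum_(j in tagged_with T_ i) untag 0 (P i) j).
  exact: esym (bigA_distr_big_dep _ _).
by apply: eq_bigr => i _; exact: esym (big_tag P i).
Qed.

Lemma sum_dffun_prod_in (A : {set I}) (F : forall i, T_ i -> R) :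
  \sum_(f : J) \prod_(i in A) F i (f i) =
  (\prod_(i in ~: A) #|T_ i|)%:R * \prod_(i in A) \sum_(y : T_ i) F i y.
Proof.
rewrite (eq_bigr (fun f : J => \prod_i (if i \in A then F i (f i) else 1))); last first.
  by move=> f _; rewrite big_mkcond.
rewrite (sum_dffun_prod (fun i y => if i \in A then F i y else 1)).
rewrite (bigID (mem A)) mulrC natr_prod /=; congr (_ * _).
  by apply: eq_bigr => i ->.
apply: eq_big => [i | i /negbTE iNA]; first by rewrite inE.
by rewrite iNA sumr_const.
Qed.

Lemma sum_dffun_coord (F : forall i, T_ i -> R) (i : I) :
  \sum_(f : J) F i (f i) =
  (\prod_(l | l != i) #|T_ l|)%:R * \sum_(y : T_ i) F i y.
Proof.
rewrite (eq_bigr (fun f : J => \prod_(l in [set i]) F l (f l))); last first.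
  by move=> f _; rewrite big_set1.
rewrite (sum_dffun_prod_in _ F) big_set1; congr ((_ : nat)%:R * _).
by apply: eq_bigl => l; rewrite in_setC1.
Qed.

Lemma sum_dffun_coord2 (F : forall i, T_ i -> R) (i k : I) : i != k ->
  \sum_(f : J) F i (f i) * F k (f k) =
  (\prod_(l | (l != i) && (l != k)) #|T_ l|)%:R *
    ((\sum_(y : T_ i) F i y) * \sum_(y : T_ k) F k y).
Proof.
move=> neq_ik.
rewrite (eq_bigr (fun f : J => \prod_(l in [set i; k]) F l (f l))); last first.
  by move=> f _; rewrite big_setU1 ?big_set1 ?inE.
rewrite (sum_dffun_prod_in _ F) big_setU1 ?big_set1 ?inE //; congr ((_ : nat)%:R * _).
by apply: eq_bigl => l; rewrite !inE negb_or.
Qed.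

End DependentProductSums.

Lemma sqr_sum_le_card_sum_sqr (R : realDomainType) (I : finType) (a : I -> R) :
  (\sum_i a i) ^+ 2 <= #|I|%:R * \sum_i a i ^+ 2.
Proof.
have sum_sqr_diff : \sum_(i : I) \sum_(k : I) (a i - a k) ^+ 2 =
    2%:R * (#|I|%:R * \sum_i a i ^+ 2 - (\sum_i a i) ^+ 2).
  have -> : \sum_(i : I) \sum_(k : I) (a i - a k) ^+ 2 =
      \sum_(i : I) \sum_(k : I) a i ^+ 2 + \sum_(i : I) \sum_(k : I) a k ^+ 2
      - 2%:R * \sum_(i : I) \sum_(k : I) a i * a k.
    rewrite -big_split /= mulr_sumr -sumrB; apply: eq_bigr => i _.
    by rewrite -big_split /= mulr_sumr -sumrB; apply: eq_bigr => k _; ring.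
  have -> : \sum_(i : I) \sum_(k : I) a i * a k = (\sum_i a i) ^+ 2.
    by rewrite expr2 big_distrlr.
  under eq_bigr do rewrite sumr_const.
  rewrite sumrMnl [X in _ + X - _]sumr_const -[_ *+ #|_|]mulr_natl.
  by ring.
have : 0 <= 2%:R * (#|I|%:R * \sum_i a i ^+ 2 - (\sum_i a i) ^+ 2) :> R.
  by rewrite -sum_sqr_diff; apply: sumr_ge0 => i _; apply: sumr_ge0 => k _; apply: sqr_ge0.
by rewrite (pmulr_rge0 _ (ltr0Sn R 1)) subr_ge0.
Qed.

Lemma eq_adjacent_const (T : Type) (d : nat) (f : 'I_d -> T) :
  (forall (i : nat) (hi : (i.+1 < d)%N), f (Ordinal (ltnW hi)) = f (Ordinal hi)) ->
  forall i k, f i = f k.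
Proof.
move=> f_adj [i hi] [k hk]; have d_gt0 : (0 < d)%N := leq_ltn_trans (leq0n i) hi.
suff eq_f0 m (hm : (m < d)%N) : f (Ordinal hm) = f (Ordinal d_gt0).
  by rewrite eq_f0 [RHS]eq_f0.
elim: m hm => [|m IHm] hm; first by congr f; apply: val_inj.
by rewrite -f_adj IHm.
Qed.

Lemma ler_natdiv2l (R : numFieldType) (c m k : nat) :
  (0 < m <= k)%N -> c%:R / k%:R <= c%:R / m%:R :> R.
Proof.
case/andP=> m_gt0 le_mk; have k_gt0 := leq_trans m_gt0 le_mk.
by rewrite ler_wpM2l ?ler0n // lef_pV2 ?posrE ?ltr0n // ler_nat.
Qed.

Lemma sqnorm_ge0 (R : realDomainType) (m : nat) (v : 'cV[R]_m) : 0 <= sqnorm v.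
Proof. by apply: sumr_ge0 => k _; apply: sqr_ge0. Qed.

Section TupleSums.
Variables (R : realFieldType) (d : nat) (n : 'I_d -> nat).
Variable x : forall i : 'I_d, 'cV[R]_(n i).
Notation J := {dffun forall i : 'I_d, 'I_(n i)}.
Local Notation B := (\sum_(j : J) (\sum_(i < d) x i (j i) 0) ^+ 2).

Lemma sum_coord_sqr (i : 'I_d) :
  \sum_(j : J) x i (j i) 0 ^+ 2 = (\prod_(l | l != i) n l)%:R * sqnorm (x i).
Proof.
rewrite (sum_dffun_coord (fun l (y : 'I_(n l)) => x l y 0 ^+ 2)).
by congr ((_ : nat)%:R * _); apply: eq_bigr => l _; rewrite card_ord.
Qed.

Lemma sum_coord_mul_ge0 (i k : 'I_d) : i != k -> onesum (x i) = onesum (x k) ->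
  0 <= \sum_(j : J) x i (j i) 0 * x k (j k) 0.
Proof.
move=> neq_ik eq_ik.
rewrite (sum_dffun_coord2 (fun l (y : 'I_(n l)) => x l y 0)) //.
apply: mulr_ge0 => //; change (0 <= onesum (x i) * onesum (x k)).
by rewrite eq_ik -expr2 sqr_ge0.
Qed.

Lemma sum_tuple_sqr_expand :
  B = \sum_(i < d) \sum_(k < d) \sum_(j : J) x i (j i) 0 * x k (j k) 0.
Proof.
under eq_bigr do rewrite expr2 big_distrlr /=.
rewrite exchange_big /=; apply: eq_bigr => i _.
by rewrite exchange_big.
Qed.

Lemma weighted_sqnorm_le_sum_tuple_sqr :
  (forall i k, onesum (x i) = onesum (x k)) ->
  \sum_(i < d) (\prod_(l | l != i) n l)%:R * sqnorm (x i) <= B.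
Proof.
move=> eq_sums; rewrite sum_tuple_sqr_expand; apply: ler_sum => i _.
rewrite -sum_coord_sqr (bigD1 i) //=.
under [X in _ <= X + _]eq_bigr do rewrite -expr2.
rewrite lerDl; apply: sumr_ge0 => k neq_ki.
by apply: sum_coord_mul_ge0; rewrite 1?eq_sym.
Qed.

Lemma sum_tuple_sqr_le_weighted_sqnorm :
  B <= d%:R * \sum_(i < d) (\prod_(l | l != i) n l)%:R * sqnorm (x i).
Proof.
apply: (le_trans (y := \sum_(j : J) #|'I_d|%:R * \sum_i x i (j i) 0 ^+ 2)).
  by apply: ler_sum => j _; apply: sqr_sum_le_card_sum_sqr.
rewrite card_ord -mulr_sumr exchange_big /=.
by under eq_bigr do rewrite sum_coord_sqr.
Qed.

End TupleSums.

Theorem lemma2p3 (R : realFieldType) (d : nat) (n : 'I_d -> nat)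
  (x : forall i : 'I_d, 'cV[R]_(n i)) :
  (2 <= d)%N ->
  (forall i : 'I_d, (0 < n i)%N) ->
  (forall (i : nat) (hi : (i.+1 < d)%N),
      onesum (x (Ordinal (ltnW hi))) = onesum (x (Ordinal hi))) ->
  let N := (\prod_(i < d) n i)%N in
  let S := \sum_(i < d) sqnorm (x i) in
  let B := \sum_(j : {dffun forall i : 'I_d, 'I_(n i)})
             (\sum_(i < d) x i (j i) 0) ^+ 2 in
  [/\ N%:R / (nmax n)%:R * S <= B,
      B <= \sum_(i < d) (d * N)%:R / (n i)%:R * sqnorm (x i)
    & \sum_(i < d) (d * N)%:R / (n i)%:R * sqnorm (x i)
        <= (d * N)%:R / (nmin n)%:R * S].
Proof.
move=> _ n_gt0 adj_sums N S B.
have eq_sums := eq_adjacent_const (f := fun i => onesum (x i)) adj_sums.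
have prodn_neq i : (\prod_(l | l != i) n l)%:R = N%:R / (n i)%:R :> R.
  by rewrite /N [in RHS](bigD1 i) //= natrM mulrC mulKf // pnatr_eq0 -lt0n.
have n_le_max i : (0 < n i <= nmax n)%N by rewrite n_gt0 leq_bigmax.
have min_le_n i : (0 < nmin n <= n i)%N.
  apply/andP; split; last by rewrite /nmin -minEnat; apply: (bigmin_le (T := nat)).
  apply: (big_ind (fun m => 0 < m)%N) => [|p q p_gt0 q_gt0|l _] //.
    exact: leq_trans (n_gt0 i) (leq_bigmax i).
  by rewrite leq_min p_gt0.
split.
- rewrite /S mulr_sumr; apply: le_trans (weighted_sqnorm_le_sum_tuple_sqr eq_sums).
  apply: ler_sum => i _; rewrite prodn_neq.
  by apply: ler_wpM2r; [exact: sqnorm_ge0 | exact: ler_natdiv2l (n_le_max i)].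
- have -> : \sum_(i < d) (d * N)%:R / (n i)%:R * sqnorm (x i) =
      d%:R * \sum_(i < d) (\prod_(l | l != i) n l)%:R * sqnorm (x i).
    by rewrite mulr_sumr; apply: eq_bigr => i _; rewrite prodn_neq natrM !mulrA.
  exact: sum_tuple_sqr_le_weighted_sqnorm.
- rewrite /S mulr_sumr; apply: ler_sum => i _.
  by apply: ler_wpM2r; [exact: sqnorm_ge0 | exact: ler_natdiv2l (min_le_n i)].
Qed.
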